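(* There is an absolute constant $K>0$ such that the following holds. Let $\mathcal U$ be a finite set, $V'\subseteq\mathbb{R}^{\mathcal U}$ a linear subspace with orthogonal projector $\Pi_{V'}$, and $c>0$ such that there is a polynomial $S$ in the variables $(f(u))_{u\in\mathcal U}$ which is a sum of squares of polynomials, of degree at most $4$, with the polynomial identity $\|\Pi_{V'}f\|_4^4=c^4\|\Pi_{V'}f\|_2^4-S(f)$. Let $f_0\in\mathbb{R}^{\mathcal U}$ be orthogonal to $V'$ with $\|f_0\|_2=1$ and $\|f_0\|_4=C>100c$, and let $V=\mathrm{span}(V'\cup\{f_0\})$. Let $\tilde{\mathbb{E}}$ be a level-$\ell$ pseudoexpectation, $\ell\ge8$, over the variables $(f(u))_{u\in\mathcal U}$ such that: $\tilde{\mathbb{E}}[L(f)Q(f)]=0$ for every linear form $L$ vanishing on $V$ and every polynomial $Q$ of degree at most $\ell-1$; $\tilde{\mathbb{E}}[(\|f\|_2^2-1)Q(f)]=0$ for every polynomial $Q$ of degree at most $\ell-2$; and $\tilde{\mathbb{E}}\|f\|_4^4\ge C^4$. Then $\tilde{\mathbb{E}}\langle f,f_0\rangle^2\ge1-Kc/C$. (In particular this holds when $\tilde{\mathbb{E}}$ is the expectation of a probability distribution over unit-norm $f\in V$ with $\|f\|_4\ge C$.)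
   Context: Norms and inner products on $\mathbb{R}^{\mathcal U}$ use the uniform (expectation) measure: $\langle g,h\rangle=\mathbb{E}_{u}g(u)h(u)$, $\|g\|_p=(\mathbb{E}_u|g(u)|^p)^{1/p}$. A level-$\ell$ pseudoexpectation is a linear functional $\tilde{\mathbb{E}}$ on real polynomials of degree at most $\ell$ in the given variables such that $\tilde{\mathbb{E}}1=1$ and $\tilde{\mathbb{E}}P^2\ge0$ for every polynomial $P$ of degree at most $\ell/2$. *)

From HB Require Import structures.
From mathcomp Require Import all_boot all_order all_algebra.
Set Implicit Arguments. Unset Strict Implicit. Unset Printing Implicit Defensive.
Import Order.TTheory GRing.Theory Num.Theory.
Local Open Scope ring_scope.

Definition Ex (R : rcfType) (U : finType) (g : U -> R) : R :=
  (\sum_u g u) / (#|U|%:R).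

Definition inner (R : rcfType) (U : finType) (g h : U -> R) : R :=
  Ex (fun u => g u * h u).

Definition norm2sq (R : rcfType) (U : finType) (g : U -> R) : R :=
  Ex (fun u => g u ^+ 2).
Definition norm4_4 (R : rcfType) (U : finType) (g : U -> R) : R :=
  Ex (fun u => g u ^+ 4).

Definition mono_deg (U : finType) (d : nat) (m : {ffun U -> 'I_d.+1}) : nat :=
  (\sum_u (m u : nat))%N.

Definition is_poly (R : rcfType) (U : finType) (d : nat)
    (P : (U -> R) -> R) : Prop :=
  exists a : {ffun U -> 'I_d.+1} -> R,
    forall x : U -> R,
      P x = \sum_(m : {ffun U -> 'I_d.+1} | (mono_deg m <= d)%N)
              a m * \prod_u x u ^+ (m u : nat).

Definition pseudoexp (R : rcfType) (U : finType) (l : nat)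
    (E : ((U -> R) -> R) -> R) : Prop :=
  [/\ (forall (P Q : (U -> R) -> R) (a : R),
         is_poly l P -> is_poly l Q ->
         E (fun x => a * P x + Q x) = a * E P + E Q),
      E (fun _ => 1) = 1
    & (forall P : (U -> R) -> R, is_poly l./2 P ->
         0 <= E (fun x => P x ^+ 2))].

Definition is_subspace (R : rcfType) (U : finType) (W : (U -> R) -> Prop) : Prop :=
  W (fun _ => 0) /\
  (forall (a : R) (v w : U -> R), W v -> W w -> W (fun u => a * v u + w u)).

Definition is_orth_proj (R : rcfType) (U : finType) (W : (U -> R) -> Prop)
    (Pi : (U -> R) -> (U -> R)) : Prop :=
  forall g : U -> R, W (Pi g) /\
    (forall v, W v -> inner (fun u => g u - Pi g u) v = 0).

Definition is_sos (R : rcfType) (U : finType) (S : (U -> R) -> R) : Prop :=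
  exists (k : nat) (q : 'I_k -> (U -> R) -> R),
    (forall i, exists d, is_poly d (q i)) /\
    (forall x, S x = \sum_(i < k) q i x ^+ 2).

(* Write x = projV x + residual, projV x = Pi x + alpha x * f0 with
   alpha x = <x, f0>; the residual coordinates are linear forms vanishing
   on V, hence annihilated by the pseudoexpectation E.  Then
   - E |x|_4^4 = E |projV x|_4^4 and |projV x|_2^2 = |Pi x|_2^2 + alpha x^2;
   - E alpha^4 <= E alpha^2 and E |Pi x|_2^4 <= 1 (unit-norm constraint);
   - E |Pi x|_4^4 <= c^4, because the SOS certificate S has pseudoexpectation
     >= 0: a degree-4 sum of squares only involves squares of quadratics;
   - quartic convexity with weights th, 1 - th, certified by an explicit sum
     of squares, gives E |projV x|_4^4 <= C^4/th^3 E alpha^4 + c^4/(1-th)^3.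
   With th = 1 - c/C this yields E alpha^2 >= (1 - c/C)^4 >= 1 - 4 c/C. *)
From mathcomp Require Import all_boot all_order all_algebra.
From mathcomp Require Import ring lra zify.
From Stdlib Require Import FunctionalExtensionality.
Set Implicit Arguments. Unset Strict Implicit. Unset Printing Implicit Defensive.
Import Order.TTheory GRing.Theory Num.Theory.
Local Open Scope ring_scope.

Section PolynomialFunctions.
Variables (R : rcfType) (U : finType).
Implicit Types (P Q F G : (U -> R) -> R) (x : U -> R) (d : nat).

Definition monomial (e : U -> nat) x : R := \prod_u x u ^+ e u.

Lemma is_poly_ext d P Q : (forall x, P x = Q x) -> is_poly d P -> is_poly d Q.
Proof. by move=> PQ [a Ha]; exists a => x; rewrite -PQ. Qed.

Lemma is_poly0 d : is_poly d (fun _ : U -> R => 0).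
Proof. by exists (fun _ => 0) => x; rewrite big1 // => m _; rewrite mul0r. Qed.

Lemma is_polyL d a P Q : is_poly d P -> is_poly d Q ->
  is_poly d (fun x => a * P x + Q x).
Proof.
move=> [p Hp] [q Hq]; exists (fun m => a * p m + q m) => x.
rewrite Hp Hq mulr_sumr -big_split /=; apply: eq_bigr => m _.
by rewrite mulrDl mulrA.
Qed.

Lemma is_polyZ d a P : is_poly d P -> is_poly d (fun x => a * P x).
Proof.
by move=> HP; apply: is_poly_ext (is_polyL a HP (is_poly0 d)) => x; rewrite addr0.
Qed.

Lemma is_polyD d P Q : is_poly d P -> is_poly d Q -> is_poly d (fun x => P x + Q x).
Proof.
by move=> HP HQ; apply: is_poly_ext (is_polyL 1 HP HQ) => x; rewrite mul1r.
Qed.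

Lemma is_polyB d P Q : is_poly d P -> is_poly d Q -> is_poly d (fun x => P x - Q x).
Proof.
by move=> HP HQ; apply: is_poly_ext (is_polyL (-1) HQ HP) => x; rewrite addrC mulN1r.
Qed.

Lemma is_polyN d P : is_poly d P -> is_poly d (fun x => - P x).
Proof.
by move=> HP; apply: is_poly_ext (is_polyB (is_poly0 d) HP) => x; rewrite sub0r.
Qed.

Lemma is_poly_sum d (I : Type) (r : seq I) (Pr : pred I) (F : I -> (U -> R) -> R) :
  (forall i, Pr i -> is_poly d (F i)) ->
  is_poly d (fun x => \sum_(i <- r | Pr i) F i x).
Proof.
move=> HF; elim: r => [|i r IH].
  by apply: is_poly_ext (is_poly0 d) => x; rewrite big_nil.
case Pi: (Pr i).
  by apply: is_poly_ext (is_polyD (HF i Pi) IH) => x; rewrite big_cons Pi.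
by apply: is_poly_ext IH => x; rewrite big_cons Pi.
Qed.

Lemma is_poly_monomial d (e : U -> nat) : (\sum_u e u <= d)%N ->
  is_poly d (monomial e).
Proof.
move=> He.
have e_lt u : (e u < d.+1)%N.
  by rewrite ltnS; apply: leq_trans He; rewrite (bigD1 u) //= leq_addr.
pose m0 : {ffun U -> 'I_d.+1} := [ffun u => Ordinal (e_lt u)].
have deg_m0 : (mono_deg m0 <= d)%N.
  by rewrite /mono_deg (eq_bigr e) // => u _; rewrite ffunE.
exists (fun m => (m == m0)%:R) => x.
rewrite (bigD1 m0) //= eqxx mul1r [X in _ + X]big1 ?addr0; last first.
  by move=> m /andP [_ /negbTE ->]; rewrite mul0r.
by apply: eq_bigr => u _; rewrite ffunE.
Qed.

Lemma is_poly_const d a : is_poly d (fun _ : U -> R => a).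
Proof.
have H0 : is_poly d (monomial (fun _ => 0%N)) by apply: is_poly_monomial; rewrite big1.
apply: is_poly_ext (is_polyZ a H0) => x.
by rewrite /monomial big1 ?mulr1 // => u _; rewrite expr0.
Qed.

Lemma is_poly_le d d' P : (d <= d')%N -> is_poly d P -> is_poly d' P.
Proof.
move=> dd' [a Ha]; apply: is_poly_ext (fun x => esym (Ha x)) _.
apply: is_poly_sum => m Hm; apply: is_polyZ.
exact: is_poly_monomial (leq_trans Hm dd').
Qed.

Lemma is_polyM d1 d2 P Q : is_poly d1 P -> is_poly d2 Q ->
  is_poly (d1 + d2) (fun x => P x * Q x).
Proof.
move=> [a Ha] [b Hb].
pose T x := \sum_(m1 | (mono_deg m1 <= d1)%N) \sum_(m2 | (mono_deg m2 <= d2)%N)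
  (a m1 * b m2) * monomial (fun u => m1 u + m2 u)%N x.
apply: (@is_poly_ext _ T) => [x|].
  rewrite Ha Hb mulr_suml; apply: eq_bigr => m1 _; rewrite mulr_sumr.
  apply: eq_bigr => m2 _; rewrite /monomial.
  rewrite (eq_bigr (fun u => x u ^+ m1 u * x u ^+ m2 u)) => [|u _]; last exact: exprD.
  by rewrite big_split /=; ring.
apply: is_poly_sum => m1 H1; apply: is_poly_sum => m2 H2; apply: is_polyZ.
by apply: is_poly_monomial; rewrite big_split /=; apply: leq_add.
Qed.

Lemma is_polyX d k P : is_poly d P -> is_poly (d * k) (fun x => P x ^+ k).
Proof.
move=> HP; elim: k => [|k IH].
  by apply: is_poly_ext (is_poly_const _ 1) => x; rewrite expr0.
rewrite mulnS; apply: is_poly_ext (is_polyM HP IH) => x; by rewrite exprS.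
Qed.

Lemma is_poly_Ex d (F : U -> (U -> R) -> R) : (forall u, is_poly d (F u)) ->
  is_poly d (fun x => Ex (fun u => F u x)).
Proof.
move=> HF; have := is_polyZ #|U|%:R^-1 (@is_poly_sum d _ (index_enum U) xpredT F (fun u _ => HF u)).
by apply: is_poly_ext => x; rewrite /Ex mulrC.
Qed.

Definition linform F := exists w : U -> R, forall x, F x = \sum_u w u * x u.

Lemma linform_ext F G : (forall x, F x = G x) -> linform F -> linform G.
Proof. by move=> FG [w Hw]; exists w => x; rewrite -FG. Qed.

Lemma linformL a F G : linform F -> linform G -> linform (fun x => a * F x + G x).
Proof.
move=> [w Hw] [w' Hw']; exists (fun u => a * w u + w' u) => x.
rewrite Hw Hw' mulr_sumr -big_split; apply: eq_bigr => u _ /=; ring.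
Qed.

Lemma linform_var u : linform (fun x => x u).
Proof.
exists (fun v => (v == u)%:R) => x.
by rewrite (bigD1 u) //= eqxx mul1r big1 ?addr0 // => v /negbTE ->; rewrite mul0r.
Qed.

Lemma is_poly_linform F : linform F -> is_poly 1 F.
Proof.
move=> [w Hw]; apply: is_poly_ext (fun x => esym (Hw x)) _.
apply: is_poly_sum => u _; apply: is_polyZ.
have Hu : is_poly 1 (monomial (fun v => (v == u) : nat)).
  by apply: is_poly_monomial; rewrite (bigD1 u) //= eqxx big1 // => v /negbTE ->.
apply: is_poly_ext Hu => x.
by rewrite /monomial (bigD1 u) //= eqxx expr1 big1 ?mulr1 // => v /negbTE ->.
Qed.

Lemma is_polyD_max a b P Q : is_poly a P -> is_poly b Q ->
  is_poly (maxn a b) (fun x => P x + Q x).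
Proof.
by move=> HP HQ; apply: is_polyD; [apply: is_poly_le HP | apply: is_poly_le HQ];
  rewrite ?leq_maxl ?leq_maxr.
Qed.

Lemma is_polyB_max a b P Q : is_poly a P -> is_poly b Q ->
  is_poly (maxn a b) (fun x => P x - Q x).
Proof.
by move=> HP HQ; apply: is_polyB; [apply: is_poly_le HP | apply: is_poly_le HQ];
  rewrite ?leq_maxl ?leq_maxr.
Qed.

Lemma is_poly_norm2sq (G : (U -> R) -> U -> R) : (forall u, linform (fun x => G x u)) ->
  is_poly 2 (fun x => norm2sq (G x)).
Proof.
move=> HG; apply: (@is_poly_Ex 2 (fun u x => G x u ^+ 2)) => u.
by have := is_polyX 2 (is_poly_linform (HG u)); rewrite mul1n.
Qed.

Lemma is_poly_norm4_4 (G : (U -> R) -> U -> R) : (forall u, linform (fun x => G x u)) ->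
  is_poly 4 (fun x => norm4_4 (G x)).
Proof.
move=> HG; apply: (@is_poly_Ex 4 (fun u x => G x u ^+ 4)) => u.
by have := is_polyX 4 (is_poly_linform (HG u)); rewrite mul1n.
Qed.

End PolynomialFunctions.

Create HintDb linform.
#[export] Hint Resolve linform_var : linform.

(* [poly_degree F] computes a syntactic degree bound for the function F;
   leaves are assumptions [is_poly d F] or else linear forms (degree 1). *)
Ltac poly_degree F :=
  lazymatch F with
  | (fun _ => ?c) => constr:(0%N)
  | (fun x => @?A x + @?B x) =>
      let a := poly_degree A in let b := poly_degree B in constr:(maxn a b)
  | (fun x => @?A x - @?B x) =>
      let a := poly_degree A in let b := poly_degree B in constr:(maxn a b)
  | (fun x => - @?A x) => poly_degree A
  | (fun x => @?A x * @?B x) =>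
      let a := poly_degree A in let b := poly_degree B in constr:((a + b)%N)
  | (fun x => @?A x ^+ ?k) => let a := poly_degree A in constr:((a * k)%N)
  | (fun x => norm2sq (@?G x)) => constr:(2%N)
  | (fun x => norm4_4 (@?G x)) => constr:(4%N)
  | (fun x => ?G x) => lazymatch goal with
                       | _ : is_poly ?d G |- _ => constr:(d)
                       | _ => constr:(1%N)
                       end
  | _ => lazymatch goal with
         | _ : is_poly ?d F |- _ => constr:(d)
         | _ => constr:(1%N)
         end
  end.

Ltac poly_build :=
  lazymatch goal with
  | |- is_poly _ (fun _ => ?c) => apply: is_poly_const
  | |- is_poly _ (fun x => @?A x + @?B x) =>
      let a := poly_degree A in let b := poly_degree B in
      apply: (@is_polyD_max _ _ a b A B); poly_build
  | |- is_poly _ (fun x => @?A x - @?B x) =>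
      let a := poly_degree A in let b := poly_degree B in
      apply: (@is_polyB_max _ _ a b A B); poly_build
  | |- is_poly _ (fun x => - @?A x) => apply: (@is_polyN _ _ _ A); poly_build
  | |- is_poly _ (fun x => @?A x * @?B x) =>
      let a := poly_degree A in let b := poly_degree B in
      apply: (@is_polyM _ _ a b A B); poly_build
  | |- is_poly _ (fun x => @?A x ^+ ?k) =>
      let a := poly_degree A in apply: (@is_polyX _ _ a k A); poly_build
  | |- is_poly _ (fun x => norm2sq (@?G x)) =>
      apply: (@is_poly_norm2sq _ _ G) => ?; solve [eauto with linform]
  | |- is_poly _ (fun x => norm4_4 (@?G x)) =>
      apply: (@is_poly_norm4_4 _ _ G) => ?; solve [eauto with linform]
  | |- _ => first [eassumption | apply: is_poly_linform; solve [eauto with linform]]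
  end.

(* [psolve] proves [is_poly d F] for F built from constants, linear forms
   (hint database [linform]), norms of linear images and assumptions. *)
Ltac psolve :=
  lazymatch goal with
  | |- is_poly ?d ?F =>
      let e := poly_degree F in
      apply: (@is_poly_le _ _ e d F); [lia | poly_build]
  end.

Lemma poly_eq0_everywhere (R : numDomainType) (p : {poly R}) :
  (forall s, p.[s] = 0) -> p = 0.
Proof.
move=> p0; apply/eqP; apply/negPn/negP => nz_p.
pose rs := [seq i%:R | i <- iota 0 (size p)] : seq R.
have rs_roots : all (root p) rs by apply/allP => z /mapP [i _ ->]; rewrite /root p0.
have rs_uniq : uniq rs.
  by rewrite map_inj_uniq ?iota_uniq // => i j /eqP; rewrite eqr_nat => /eqP.
by have := max_poly_roots nz_p rs_roots rs_uniq; rewrite size_map size_iota ltnn.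
Qed.

Lemma coef_sqr_top (R : idomainType) (p : {poly R}) (D : nat) :
  (size p <= D.+1)%N -> (p ^+ 2)`_(D + D) = p`_D ^+ 2.
Proof.
have [->|nz_p] := eqVneq p 0; first by rewrite expr0n /= !coef0 expr0n.
have size_sqr := size_exp p 2.
have sp0 : (0 < size p)%N by rewrite size_poly_gt0.
rewrite leq_eqVlt ltnS => /orP [/eqP sp | sp].
  have -> : (D + D = (size (p ^+ 2)).-1)%N by rewrite size_sqr sp; lia.
  by rewrite -/(lead_coef _) lead_coef_exp /lead_coef sp.
rewrite !nth_default //; first by rewrite expr0n.
have : (size (p ^+ 2) <= ((size p).-1 * 2).+1)%N by rewrite -size_sqr leqSpred.
by move: sp0 sp; case: (size p) => //= n; lia.
Qed.

(* For a polynomial P(x) = sum_m a m x^m of degree at most d and a point x,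
   [radial a x] is the univariate polynomial s |-> P(s x); its coefficient
   of degree k is the degree-k homogeneous part of P evaluated at x. *)
Section Radial.
Variables (R : rcfType) (U : finType) (d : nat).
Variables (a : {ffun U -> 'I_d.+1} -> R) (x : U -> R).

Definition radial : {poly R} :=
  \sum_(m | (mono_deg m <= d)%N) (a m * \prod_u x u ^+ m u) *: 'X^(mono_deg m).

Lemma radialE s : radial.[s] =
  \sum_(m | (mono_deg m <= d)%N) a m * \prod_u (s * x u) ^+ m u.
Proof.
rewrite horner_sum; apply: eq_bigr => m _.
rewrite hornerZ hornerXn -mulrA /mono_deg -prodrXr -big_split /=.
by apply/congr1/eq_bigr => u _; rewrite exprMn mulrC.
Qed.

Lemma size_radial : (size radial <= d.+1)%N.
Proof.
apply: leq_trans (size_sum _ _ _) _; apply/bigmax_leqP => m Hm.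
by apply: leq_trans (size_scale_leq _ _) _; rewrite size_polyXn ltnS.
Qed.

Lemma coef_radial_top : radial`_d =
  \sum_(m | mono_deg m == d) a m * \prod_u x u ^+ m u.
Proof.
rewrite coef_sum (bigID (fun m => mono_deg m == d)) /=.
rewrite [X in _ + X]big1 ?addr0 => [|m /andP [_ /negbTE dm]]; last first.
  by rewrite coefZ coefXn eq_sym dm mulr0.
rewrite (eq_bigl (fun m => mono_deg m == d)) => [|m]; last first.
  by case: eqP => [->|]; rewrite ?leqnn ?andbF.
by apply: eq_bigr => m /eqP dm; rewrite coefZ coefXn dm eqxx mulr1.
Qed.

End Radial.

Section SosDegree.
Variables (R : rcfType) (U : finType).

Definition polyfun d (a : {ffun U -> 'I_d.+1} -> R) (x : U -> R) : R :=
  \sum_(m : {ffun U -> 'I_d.+1} | (mono_deg m <= d)%N) a m * \prod_u x u ^+ m u.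

(* If a degree-4 polynomial is a sum of squares of polynomials of degree
   at most D > 2, the degree-D homogeneous parts of the squared polynomials
   all vanish: their squares would give the (nonzero) degree-2D part. *)
Lemma sos_top_vanish k D (a : 'I_k -> {ffun U -> 'I_D.+1} -> R)
    (b : {ffun U -> 'I_4.+1} -> R) (x : U -> R) :
  (2 < D)%N -> (forall y, polyfun b y = \sum_(i < k) polyfun (a i) y ^+ 2) ->
  forall i, (radial (a i) x)`_D = 0.
Proof.
move=> D_gt2 sos.
have radial_sos : \sum_(i < k) radial (a i) x ^+ 2 = radial b x.
  apply/eqP; rewrite -subr_eq0; apply/eqP/poly_eq0_everywhere => s.
  rewrite hornerD hornerN horner_sum radialE -/(polyfun b (fun u => s * x u)) sos.
  by apply/eqP; rewrite subr_eq0; apply/eqP/eq_bigr => i _; rewrite horner_exp radialE.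
have top0 : \sum_(i < k) (radial (a i) x)`_D ^+ 2 = 0.
  rewrite -(eq_bigr _ (fun i _ => coef_sqr_top (size_radial (a i) x))).
  rewrite -coef_sum radial_sos nth_default //.
  by apply: leq_trans (size_radial b x) _; lia.
move=> i; apply/eqP; rewrite -sqrf_eq0; apply/eqP.
exact: (psumr_eq0P (fun i _ => sqr_ge0 _) top0).
Qed.

Lemma sos_lower_degree k D (q : 'I_k -> (U -> R) -> R) (S : (U -> R) -> R) :
  (2 < D)%N -> is_poly 4 S -> (forall x, S x = \sum_(i < k) q i x ^+ 2) ->
  (forall i, is_poly D (q i)) -> forall i, is_poly D.-1 (q i).
Proof.
move=> D_gt2 [b Hb] HS /fin_all_exists [a Ha] i.
have sos y : polyfun b y = \sum_(i < k) polyfun (a i) y ^+ 2.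
  by rewrite /polyfun -Hb HS; apply: eq_bigr => j _; rewrite Ha.
pose low x := \sum_(m : {ffun U -> 'I_D.+1} | (mono_deg m < D)%N)
  a i m * \prod_u x u ^+ m u.
apply: (@is_poly_ext _ _ _ low) => [x|].
  rewrite Ha (bigID (fun m => mono_deg m == D)) /=.
  rewrite (eq_bigl (fun m => mono_deg m == D)) => [|m]; last first.
    by case: eqP => [->|]; rewrite ?leqnn ?andbF.
  rewrite -coef_radial_top (sos_top_vanish x D_gt2 sos) add0r.
  by apply: eq_bigl => m; rewrite ltn_neqAle andbC.
apply: is_poly_sum => m Hm; apply: is_polyZ.
by apply: is_poly_monomial; rewrite -ltnS (ltn_predK D_gt2).
Qed.

Lemma sos_deg2 k (q : 'I_k -> (U -> R) -> R) (S : (U -> R) -> R) :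
  is_poly 4 S -> (forall x, S x = \sum_(i < k) q i x ^+ 2) ->
  (forall i, exists d, is_poly d (q i)) -> forall i, is_poly 2 (q i).
Proof.
move=> HS Hsum /fin_all_exists [d Hd].
have : forall i, is_poly (\max_j d j) (q i).
  by move=> i; apply: is_poly_le (Hd i); apply: leq_bigmax.
elim: (\max_j d j) => [|D IH] HD i; first exact: is_poly_le (HD i).
have [D_le1 | D_gt1] := leqP D.+1 2; first exact: is_poly_le (HD i).
exact: IH (sos_lower_degree D_gt1 HS Hsum HD) i.
Qed.

End SosDegree.
(* Pointwise convexity of t |-> t^4 with a sum-of-squares certificate:
   for weights th and e = 1 - th, th A^4 + e B^4 - (th A + e B)^4 is an
   explicit nonnegative combination of squares of quadratics. *)
Definition quartic_gap (R : comPzRingType) (th A B : R) : R :=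
  th * (1 - th) * (A ^+ 2 - B ^+ 2) ^+ 2
  + th ^+ 2 * (1 - th) * ((A - B) * A) ^+ 2
  + th * (1 - th) ^+ 2 * ((A - B) * B) ^+ 2
  + th * (1 - th) * ((A - B) * (th * A + (1 - th) * B)) ^+ 2.

Lemma quartic_gapE (R : comPzRingType) (th A B : R) :
  th * A ^+ 4 + (1 - th) * B ^+ 4 - (th * A + (1 - th) * B) ^+ 4 = quartic_gap th A B.
Proof. by rewrite /quartic_gap; ring. Qed.

Section PseudoExpectation.
Variables (R : rcfType) (U : finType) (l : nat) (E : ((U -> R) -> R) -> R).
Hypothesis HE : pseudoexp l E.
Implicit Types (P Q : (U -> R) -> R).

Lemma E_ext P Q : (forall x, P x = Q x) -> E P = E Q.
Proof. by move=> PQ; congr E; apply: functional_extensionality. Qed.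

Lemma E_lin a P Q : is_poly l P -> is_poly l Q ->
  E (fun x => a * P x + Q x) = a * E P + E Q.
Proof. by case: HE => lin _ _; apply: lin. Qed.

Lemma E0 : E (fun _ => 0) = 0.
Proof.
have := E_lin 1 (is_poly0 R U l) (is_poly0 R U l).
rewrite (@E_ext (fun x => 1 * 0 + 0) (fun _ => 0)) => [|x]; last by rewrite mul1r addr0.
by rewrite mul1r => E0_double; lra.
Qed.

Lemma E_Z a P : is_poly l P -> E (fun x => a * P x) = a * E P.
Proof.
move=> HP; rewrite -[RHS]addr0 -E0 -E_lin //; last exact: is_poly0.
by apply: E_ext => x; rewrite addr0.
Qed.

Lemma E_D P Q : is_poly l P -> is_poly l Q -> E (fun x => P x + Q x) = E P + E Q.
Proof.
by move=> HP HQ; rewrite -[E P]mul1r -E_lin //; apply: E_ext => x; rewrite mul1r.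
Qed.

Lemma E_B P Q : is_poly l P -> is_poly l Q -> E (fun x => P x - Q x) = E P - E Q.
Proof.
move=> HP HQ; rewrite addrC -mulN1r -E_lin //.
by apply: E_ext => x; rewrite mulN1r addrC.
Qed.

Lemma E_sum (I : Type) (r : seq I) (Pr : pred I) (F : I -> (U -> R) -> R) :
  (forall i, Pr i -> is_poly l (F i)) ->
  E (fun x => \sum_(i <- r | Pr i) F i x) = \sum_(i <- r | Pr i) E (F i).
Proof.
move=> HF; elim: r => [|i r IH].
  by rewrite big_nil -[RHS]E0; apply: E_ext => x; rewrite big_nil.
rewrite big_cons; case Pi: (Pr i); rewrite -IH; last first.
  by apply: E_ext => x; rewrite big_cons Pi.
rewrite -E_D; [|exact: HF|exact: is_poly_sum].
by apply: E_ext => x; rewrite big_cons Pi.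
Qed.

Lemma E_const a : E (fun _ => a) = a.
Proof.
case: HE => _ E1 _; rewrite -[RHS]mulr1 -E1 -E_Z; last exact: is_poly_const.
by apply: E_ext => x; rewrite mulr1.
Qed.

Lemma E_sq_scaled k P : (4 <= l)%N -> 0 <= k -> is_poly 2 P ->
  0 <= E (fun x => k * P x ^+ 2).
Proof.
move=> l4 k0 HP; case: HE => _ _ pos.
rewrite E_Z; last by have := is_polyX 2 HP; apply: is_poly_le; lia.
by apply/mulr_ge0/pos => //; apply: is_poly_le HP; lia.
Qed.

Lemma E_quartic_gap_ge0 th (A B : (U -> R) -> R) : (4 <= l)%N -> 0 <= th <= 1 ->
  is_poly 1 A -> is_poly 1 B -> 0 <= E (fun x => quartic_gap th (A x) (B x)).
Proof.
move=> l4 /andP [th_ge0 th_le1] HA HB; have e_ge0 : 0 <= 1 - th by rewrite subr_ge0.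
rewrite /quartic_gap !E_D; try psolve.
by repeat apply: addr_ge0; apply: E_sq_scaled => //; first [psolve | rewrite ?mulr_ge0 ?exprn_ge0].
Qed.

End PseudoExpectation.

Section Projector.
Variables (R : rcfType) (U : finType) (W : (U -> R) -> Prop) (Pi : (U -> R) -> U -> R).
Hypotheses (HW : is_subspace W) (HPi : is_orth_proj W Pi) (U_gt0 : (0 < #|U|)%N).

Lemma card_neq0 : #|U|%:R != 0 :> R.
Proof. by rewrite pnatr_eq0 -lt0n. Qed.

Lemma Ex_eq0 (g : U -> R) : Ex g = 0 -> \sum_u g u = 0.
Proof. by rewrite /Ex => /eqP; rewrite mulf_eq0 invr_eq0 (negbTE card_neq0) orbF => /eqP. Qed.

Lemma inner_self_eq0 (g : U -> R) : inner g g = 0 -> g = (fun _ => 0).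
Proof.
move=> /Ex_eq0 sum0; apply: functional_extensionality => u.
have /eqP : g u * g u = 0 := psumr_eq0P (fun v _ => sqr_ge0 (g v)) sum0 (i := u) isT.
by rewrite mulf_eq0 orbb => /eqP.
Qed.

Lemma subspace_sum (r : seq U) (a : U -> R) (h : U -> U -> R) :
  (forall v, W (h v)) -> W (fun u => \sum_(v <- r) a v * h v u).
Proof.
case: HW => W0 Wlin Wh; elim: r => [|v r IH].
  rewrite (_ : (fun _ => _) = fun _ => 0) //.
  by apply: functional_extensionality => u; rewrite big_nil.
rewrite (_ : (fun _ => _) = fun u => a v * h v u + \sum_(v0 <- r) a v0 * h v0 u); first exact: Wlin.
by apply: functional_extensionality => u; rewrite big_cons.
Qed.

Lemma orth_proj_unique (g p : U -> R) : W p ->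
  (forall w, W w -> inner (fun u => g u - p u) w = 0) -> Pi g = p.
Proof.
case: HW => _ Wlin Wp orth_p; have [WPg orth_Pg] := HPi g.
pose dif u := Pi g u - p u.
have Wdif : W dif.
  rewrite (_ : dif = fun u => (-1) * p u + Pi g u); first exact: Wlin.
  by apply: functional_extensionality => u; rewrite /dif mulN1r addrC.
have : inner dif dif = inner (fun u => g u - p u) dif - inner (fun u => g u - Pi g u) dif.
  rewrite /inner /Ex -mulrBl -sumrB; congr (_ * _); apply: eq_bigr => u _.
  by rewrite /dif; ring.
rewrite orth_p // orth_Pg // subrr => /inner_self_eq0 dif0.
apply: functional_extensionality => u; apply/eqP; rewrite -subr_eq0; apply/eqP.
exact: (congr1 (fun f => f u) dif0).
Qed.

Definition delta (v : U) : U -> R := fun u => (u == v)%:R.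

Lemma delta_expand (x : U -> R) u : x u = \sum_v x v * delta v u.
Proof.
rewrite (bigD1 u) //= /delta eqxx mulr1 big1 ?addr0 // => v.
by rewrite eq_sym => /negbTE ->; rewrite mulr0.
Qed.

Lemma orth_proj_linear (x : U -> R) u : Pi x u = \sum_v x v * Pi (delta v) u.
Proof.
suff -> : Pi x = (fun u => \sum_v x v * Pi (delta v) u) by [].
apply: orth_proj_unique; first by apply: subspace_sum => v; case: (HPi (delta v)).
move=> w Ww.
have orth_delta v : \sum_u (delta v u - Pi (delta v) u) * w u = 0.
  by case: (HPi (delta v)) => _ /(_ w Ww) /Ex_eq0.
rewrite /inner /Ex.
have -> : \sum_u (x u - \sum_v x v * Pi (delta v) u) * w u =
          \sum_v x v * \sum_u (delta v u - Pi (delta v) u) * w u.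
  rewrite (eq_bigr (fun u => \sum_v x v * ((delta v u - Pi (delta v) u) * w u))).
    by rewrite exchange_big /=; apply: eq_bigr => v _; rewrite mulr_sumr.
  move=> z _; rewrite {1}(delta_expand x z) -sumrB mulr_suml.
  by apply: eq_bigr => v _; ring.
by rewrite big1 ?mul0r // => v _; rewrite orth_delta mulr0.
Qed.

End Projector.

Section Lemma5p6.
Variables (R : rcfType) (U : finType).
Variables (V' : (U -> R) -> Prop) (Pi : (U -> R) -> U -> R) (c : R).
Hypotheses (HV' : is_subspace V') (HPi : is_orth_proj V' Pi) (c_gt0 : 0 < c).
Variable S : (U -> R) -> R.
Hypotheses (S_deg : is_poly 4 S) (S_sos : is_sos S)
  (hypercontr : forall f, norm4_4 (Pi f) = c ^+ 4 * norm2sq (Pi f) ^+ 2 - S f).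
Variables (f0 : U -> R) (C : R).
Hypotheses (f0_orth : forall v, V' v -> inner f0 v = 0) (f0_unit : norm2sq f0 = 1)
  (f0_norm4 : norm4_4 f0 = C ^+ 4) (cC : 100 * c < C).
Variable V : (U -> R) -> Prop.
Hypothesis HV : forall g, V g <-> exists v t, V' v /\ g = (fun u => v u + t * f0 u).
Variables (l : nat) (E : ((U -> R) -> R) -> R).
Hypotheses (l_ge8 : (8 <= l)%N) (HE : pseudoexp l E)
  (E_orthV : forall w : U -> R, (forall v, V v -> \sum_u w u * v u = 0) ->
       forall Q, is_poly l.-1 Q -> E (fun x => (\sum_u w u * x u) * Q x) = 0)
  (E_unit : forall Q, is_poly (l - 2) Q -> E (fun x => (norm2sq x - 1) * Q x) = 0)
  (E_norm4_ge : C ^+ 4 <= E (fun x => norm4_4 x)).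

Lemma card_U_gt0 : (0 < #|U|)%N.
Proof.
rewrite lt0n; apply/negP => /eqP U0; move: f0_unit.
by rewrite /norm2sq /Ex U0 invr0 mulr0 => /eqP; rewrite eq_sym oner_eq0.
Qed.

Let n : R := #|U|%:R.

Lemma n_gt0 : 0 < n.
Proof. by rewrite ltr0n card_U_gt0. Qed.

Definition alpha (x : U -> R) : R := inner x f0.
Definition projV (x : U -> R) : U -> R := fun u => Pi x u + alpha x * f0 u.

Lemma linform_alpha : linform alpha.
Proof.
exists (fun u => f0 u / n) => x; rewrite /alpha /inner /Ex mulr_suml.
by apply: eq_bigr => u _; rewrite /n; ring.
Qed.

Lemma linform_Pi u : linform (fun x => Pi x u).
Proof.
exists (fun v => Pi (delta R v) u) => x.
rewrite (orth_proj_linear HV' HPi card_U_gt0).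
by apply: eq_bigr => v _; rewrite mulrC.
Qed.

Lemma linform_projV u : linform (fun x => projV x u).
Proof.
apply: linform_ext (linformL (f0 u) linform_alpha (linform_Pi u)) => x.
by rewrite /projV addrC mulrC.
Qed.

Lemma linform_residual u : linform (fun x => x u - projV x u).
Proof.
apply: linform_ext (linformL (-1) (linform_projV u) (linform_var R u)) => x.
by rewrite mulN1r addrC.
Qed.

#[local] Hint Resolve linform_alpha linform_Pi linform_projV linform_residual : linform.

Lemma sum_Pi_f0 x : \sum_u Pi x u * f0 u = 0.
Proof.
have [VPx _] := HPi x; apply: (Ex_eq0 card_U_gt0 (g := fun u => Pi x u * f0 u)).
by rewrite -[RHS](f0_orth VPx); congr Ex; apply: functional_extensionality => u; rewrite mulrC.
Qed.

Lemma sum_f0_sq : \sum_u f0 u ^+ 2 = n.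
Proof.
move: f0_unit; rewrite /norm2sq /Ex => /(canRL (mulfVK (card_neq0 R card_U_gt0))).
by rewrite mul1r.
Qed.

(* Pythagoras: Pi x and f0 are orthogonal. *)
Lemma norm2sq_projV x : norm2sq (projV x) = norm2sq (Pi x) + alpha x ^+ 2.
Proof.
rewrite /norm2sq /Ex.
have -> : \sum_u projV x u ^+ 2 = \sum_u Pi x u ^+ 2
    + 2 * alpha x * \sum_u Pi x u * f0 u + alpha x ^+ 2 * \sum_u f0 u ^+ 2.
  by rewrite !mulr_sumr -!big_split; apply: eq_bigr => u _ /=; rewrite /projV; ring.
rewrite sum_Pi_f0 sum_f0_sq mulr0 addr0 mulrDl; congr (_ + _).
by rewrite -/n -mulrA mulfV ?mulr1 // gt_eqF // n_gt0.
Qed.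

Lemma projV_on_V v : V v -> projV v = v.
Proof.
case/HV => v' [s [V'v' ->]].
have Pi_v : Pi (fun u => v' u + s * f0 u) = v'.
  apply: (orth_proj_unique HV' HPi card_U_gt0) => // w V'w.
  have -> : inner (fun u => v' u + s * f0 u - v' u) w = s * inner f0 w.
    rewrite /inner /Ex mulrA mulr_sumr; congr (_ * _); apply: eq_bigr => z _; ring.
  by rewrite f0_orth // mulr0.
have alpha_v : alpha (fun u => v' u + s * f0 u) = s.
  have := f0_orth V'v'; rewrite /alpha /inner /Ex => orth.
  have -> : \sum_u (v' u + s * f0 u) * f0 u = \sum_u f0 u * v' u + s * \sum_u f0 u ^+ 2.
    by rewrite mulr_sumr -big_split; apply: eq_bigr => z _ /=; ring.
  by rewrite mulrDl orth add0r sum_f0_sq -mulrA mulfV ?mulr1 // gt_eqF // n_gt0.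
by apply: functional_extensionality => u; rewrite /projV Pi_v alpha_v.
Qed.

(* The residual coordinates are linear forms vanishing on V, so they are
   annihilated by the pseudoexpectation. *)
Lemma E_residual u Q : is_poly l.-1 Q -> E (fun x => (x u - projV x u) * Q x) = 0.
Proof.
move=> HQ; have [w Hw] := linform_residual u.
rewrite (E_ext E (Q := fun x => (\sum_u w u * x u) * Q x)) => [|x]; last by rewrite Hw.
by apply: E_orthV => // v Vv; rewrite -Hw projV_on_V // subrr.
Qed.

Lemma E_unit_norm Q : is_poly 2 Q -> E (fun x => (norm2sq x - 1) * Q x) = 0.
Proof. by move=> HQ; apply: E_unit; apply: is_poly_le HQ; lia. Qed.

Lemma E_norm2sq_projV Q : is_poly 2 Q ->
  E (fun x => (norm2sq x - norm2sq (projV x)) * Q x) = 0.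
Proof.
move=> HQ.
rewrite (E_ext E (Q := fun x => \sum_u (x u - projV x u) * ((x u + projV x u) * Q x / n))) => [|x].
  by rewrite (E_sum HE) ?big1 // => u _; [apply: E_residual | ]; psolve.
by rewrite /norm2sq /Ex -mulrBl -sumrB !mulr_suml; apply: eq_bigr => u _; ring.
Qed.

Lemma E_norm4_projV : E (fun x => norm4_4 x) = E (fun x => norm4_4 (projV x)).
Proof.
apply/eqP; rewrite -subr_eq0 -(E_B HE); try psolve.
rewrite (E_ext E (Q := fun x => \sum_u (x u - projV x u) *
  ((x u ^+ 3 + x u ^+ 2 * projV x u + x u * projV x u ^+ 2 + projV x u ^+ 3) / n))) => [|x].
  by rewrite (E_sum HE) ?big1 // => u _; [apply: E_residual | ]; psolve.
by rewrite /norm4_4 /Ex -mulrBl -sumrB mulr_suml; apply: eq_bigr => u _; ring.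
Qed.

Lemma E_alpha_normPi_ge0 : 0 <= E (fun x => alpha x ^+ 2 * norm2sq (Pi x)).
Proof.
rewrite (E_ext E (Q := fun x => \sum_u n^-1 * (alpha x * Pi x u) ^+ 2)) => [|x].
  rewrite (E_sum HE); last by move=> u _; psolve.
  apply: sumr_ge0 => u _; apply: (E_sq_scaled HE); try psolve; first lia.
  by rewrite invr_ge0 ltW // n_gt0.
by rewrite /norm2sq /Ex mulr_suml mulr_sumr; apply: eq_bigr => u _; ring.
Qed.

(* E alpha^4 <= E alpha^2, since alpha^2 - alpha^4 = alpha^2 (1 - |x|^2)
   + alpha^2 (|x|^2 - |projV x|^2) + alpha^2 |Pi x|^2. *)
Lemma E_alpha4_le : E (fun x => alpha x ^+ 4) <= E (fun x => alpha x ^+ 2).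
Proof.
rewrite -subr_ge0 -(E_B HE); try psolve.
rewrite (E_ext E (Q := fun x => (norm2sq x - norm2sq (projV x)) * alpha x ^+ 2
   - (norm2sq x - 1) * alpha x ^+ 2 + alpha x ^+ 2 * norm2sq (Pi x))) => [|x]; last first.
  by rewrite norm2sq_projV; ring.
rewrite (E_D HE); try psolve.
rewrite (E_B HE); try psolve.
by rewrite E_norm2sq_projV ?E_unit_norm ?subrr ?add0r ?E_alpha_normPi_ge0 //; psolve.
Qed.

(* E |Pi x|^4 <= 1, since with g = |Pi x|^2,
   1 - g^2 = (1 + g) ((1 - |x|^2) + (|x|^2 - |projV x|^2)) + alpha^2 (1 + g). *)
Lemma E_normPi4_le1 : E (fun x => norm2sq (Pi x) ^+ 2) <= 1.
Proof.
rewrite -subr_ge0 -{1}(E_const HE 1) -(E_B HE); try psolve.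
rewrite (E_ext E (Q := fun x => (norm2sq x - norm2sq (projV x)) * (1 + norm2sq (Pi x))
   - (norm2sq x - 1) * (1 + norm2sq (Pi x))
   + (1 * alpha x ^+ 2 + alpha x ^+ 2 * norm2sq (Pi x)))) => [|x]; last first.
  by rewrite norm2sq_projV; ring.
rewrite (E_D HE); try psolve.
rewrite (E_B HE); try psolve.
rewrite E_norm2sq_projV ?E_unit_norm ?subrr ?add0r; try psolve.
rewrite (E_D HE); try psolve.
apply: addr_ge0; last exact: E_alpha_normPi_ge0.
by apply: (E_sq_scaled HE); [lia | | psolve].
Qed.

(* The sum of squares S has nonnegative pseudoexpectation: its squared
   polynomials have degree at most 2. *)
Lemma E_S_ge0 : 0 <= E S.
Proof.
have [k [q [q_poly S_eq]]] := S_sos.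
have q_deg2 := sos_deg2 S_deg S_eq q_poly.
rewrite (E_ext E (Q := fun x => \sum_(i < k) 1 * q i x ^+ 2)) => [|x]; last first.
  by rewrite S_eq; apply: eq_bigr => i _; rewrite mul1r.
rewrite (E_sum HE); last by move=> i _; have qi := q_deg2 i; psolve.
by apply: sumr_ge0 => i _; apply: (E_sq_scaled HE); [lia | exact: ler01 | exact: q_deg2].
Qed.

Lemma E_normPi4_4_le : E (fun x => norm4_4 (Pi x)) <= c ^+ 4.
Proof.
rewrite (E_ext E (Q := fun x => c ^+ 4 * norm2sq (Pi x) ^+ 2 - S x)) => [|x];
  last exact: hypercontr.
rewrite (E_B HE); try psolve.
rewrite (E_Z HE); last by psolve.
have := lerB (ler_wpM2l (exprn_ge0 4 (ltW c_gt0)) E_normPi4_le1) E_S_ge0.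
by rewrite mulr1 subr0.
Qed.

(* Quartic convexity along the orthogonal decomposition
   projV x = th (alpha x f0 / th) + (1 - th) (Pi x / (1 - th)). *)
Lemma E_norm4_projV_le th : 0 < th < 1 ->
  E (fun x => norm4_4 (projV x)) <=
  C ^+ 4 / th ^+ 3 * E (fun x => alpha x ^+ 4) + ((1 - th) ^+ 3)^-1 * E (fun x => norm4_4 (Pi x)).
Proof.
move=> /andP [th_gt0 th_lt1]; have e_gt0 : 0 < 1 - th by rewrite subr_gt0.
pose A x u := alpha x * f0 u / th.
pose B x u := Pi x u / (1 - th).
have gap_eq x : C ^+ 4 / th ^+ 3 * alpha x ^+ 4 + ((1 - th) ^+ 3)^-1 * norm4_4 (Pi x)
    - norm4_4 (projV x) = \sum_u n^-1 * quartic_gap th (A x u) (B x u).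
  rewrite -f0_norm4 /norm4_4 /Ex !mulr_suml !mulr_sumr -big_split /= -sumrB.
  apply: eq_bigr => u _; rewrite -quartic_gapE /A /B /projV.
  by field; rewrite (gt_eqF e_gt0) (gt_eqF th_gt0) (gt_eqF n_gt0).
rewrite -subr_ge0 -!(E_Z HE); try psolve.
rewrite -(E_D HE); try psolve.
rewrite -(E_B HE); try psolve.
rewrite (E_ext E (Q := fun x => \sum_u n^-1 * quartic_gap th (A x u) (B x u))) //.
rewrite (E_sum HE); last by move=> u _; rewrite /quartic_gap /A /B; psolve.
apply: sumr_ge0 => u _; rewrite (E_Z HE); last by rewrite /quartic_gap /A /B; psolve.
apply: mulr_ge0; first by rewrite invr_ge0 ltW // n_gt0.
apply: (E_quartic_gap_ge0 HE (A := fun x => alpha x * f0 u / th) (B := fun x => Pi x u / (1 - th)));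
  try psolve; first lia.
by apply/andP; split; apply: ltW.
Qed.

(* Combining the estimates with th = 1 - c/C: writing d = c/C,
   C^4 <= E |projV x|_4^4 <= C^4 (1-d)^-3 E alpha^2 + d C^4, hence
   E alpha^2 >= (1 - d)^4 >= 1 - 4 d. *)
Lemma E_alpha2_ge : 1 - 4 * c / C <= E (fun x => alpha x ^+ 2).
Proof.
have c_lt_C : c < C.
  have one_le_100 : 1 <= 100 :> R by rewrite ler1n.
  by apply: le_lt_trans cC; rewrite ler_peMl ?(ltW c_gt0) ?one_le_100.
have C_gt0 : 0 < C by apply: lt_trans c_lt_C.
set d := c / C; set p := E (fun x => alpha x ^+ 2).
have d_gt0 : 0 < d by rewrite divr_gt0.
have d_lt1 : d < 1 by rewrite /d ltr_pdivrMr // mul1r.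
have th_bounds : 0 < 1 - d < 1 by apply/andP; split; lra.
have c4_eq : (d ^+ 3)^-1 * c ^+ 4 = d * C ^+ 4.
  by rewrite /d; field; rewrite !gt_eqF.
have key : C ^+ 4 <= C ^+ 4 / (1 - d) ^+ 3 * p + d * C ^+ 4.
  apply: (le_trans E_norm4_ge); rewrite E_norm4_projV.
  have e_d : 1 - (1 - d) = d by ring.
  apply: (le_trans (E_norm4_projV_le th_bounds)); rewrite e_d -c4_eq.
  apply: lerD; apply: ler_wpM2l; rewrite ?E_alpha4_le ?E_normPi4_4_le //.
    by rewrite divr_ge0 ?exprn_ge0 ?(ltW C_gt0) // ltW // subr_gt0.
  by rewrite invr_ge0 exprn_ge0 // ltW.
have th4_le : (1 - d) ^+ 4 <= p.
  have th3_gt0 : 0 < (1 - d) ^+ 3 by rewrite exprn_gt0 // subr_gt0.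
  rewrite exprSr -ler_pdivlMl // mulrC.
  rewrite -(ler_pM2l (exprn_gt0 4 C_gt0)) mulrA; lra.
have -> : 4 * c / C = 4 * d by rewrite /d mulrA.
by apply: le_trans th4_le; nra.
Qed.

End Lemma5p6.

Theorem lemma5p6 :
  exists K : rat, 0 < K /\
  forall (R : rcfType) (U : finType)
         (V' : (U -> R) -> Prop) (Pi : (U -> R) -> (U -> R)) (c : R),
    is_subspace V' -> is_orth_proj V' Pi -> 0 < c ->
    (exists S : (U -> R) -> R, is_poly 4 S /\ is_sos S /\
       forall f : U -> R,
         norm4_4 (Pi f) = c ^+ 4 * (norm2sq (Pi f)) ^+ 2 - S f) ->
  forall (f0 : U -> R) (C : R),
    (forall v, V' v -> inner f0 v = 0) ->
    norm2sq f0 = 1 ->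
    0 <= C -> norm4_4 f0 = C ^+ 4 ->
    100 * c < C ->
  forall (V : (U -> R) -> Prop),
    (forall g, V g <-> exists v t, V' v /\ g = (fun u => v u + t * f0 u)) ->
  forall (l : nat) (E : ((U -> R) -> R) -> R),
    (8 <= l)%N -> pseudoexp l E ->
    (forall w : U -> R, (forall v, V v -> \sum_u w u * v u = 0) ->
       forall Q, is_poly l.-1 Q ->
         E (fun x => (\sum_u w u * x u) * Q x) = 0) ->
    (forall Q, is_poly (l - 2) Q ->
       E (fun x => (norm2sq x - 1) * Q x) = 0) ->
    C ^+ 4 <= E (fun x => norm4_4 x) ->
    1 - ratr K * c / C <= E (fun x => inner x f0 ^+ 2).
Proof.
exists 4; split => // R U V' Pi c HV' HPi c_gt0 [S [S_deg [S_sos hypercontr]]]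
  f0 C f0_orth f0_unit _ f0_norm4 cC V HV l E l_ge8 HE E_orthV E_unit E_norm4_ge.
rewrite (ratr_nat R 4).
exact: (E_alpha2_ge HV' HPi c_gt0 S_deg S_sos hypercontr f0_orth f0_unit f0_norm4 cC HV
  l_ge8 HE E_orthV E_unit E_norm4_ge).
Qed.
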